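(* Let $x$ be a $\Pi$-module with $\tau$-datum $(M,\theta)$. Suppose that as a $Q$-representation $M=M_1\oplus M_2$ and $\operatorname{Hom}_Q(M_2,\tau M_1)=0$. For $i=1,2$ let $\iota_i:M_i\hookrightarrow M$ and $p_i:M\twoheadrightarrow M_i$ be the canonical maps and let $x_i$ be the $\Pi$-module with $\tau$-datum $(M_i,\theta_i)$, $\theta_i=\tau(p_i)\theta\iota_i\in\operatorname{Hom}_Q(M_i,\tau M_i)$. Then $x$ is an extension of $x_1$ by $x_2$ (there is a short exact sequence $0\to x_2\to x\to x_1\to0$). Suppose moreover that $\operatorname{Hom}_Q(M_2,M_1)=0$ and $x$ is rigid. Then $x_1$ and $x_2$ are rigid. If in addition $\operatorname{End}_Q(M_2)=K$, then $\operatorname{Ext}^1_\Pi(x,x_1)=0$.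
   Context: $K$ is an algebraically closed field, $Q=(I,\Omega)$ a finite quiver without oriented cycles and without loops, and $\Pi$ its preprojective algebra ($K\overline Q$ modulo the ideal generated by $\sum_{h\in\Omega}(hh^{op}-h^{op}h)$). $\tau$ is the Auslander–Reiten translation on finite-dimensional $KQ$-modules (equivalently $\epsilon\Phi^+$, with $\Phi^+$ the BGP Coxeter functor and $\epsilon$ the twist by the automorphism multiplying each arrow by $-1$). By Ringel, finite-dimensional $\Pi$-modules are equivalent to pairs $(M,\theta)$ ($\tau$-data) with $M$ a $KQ$-module (the restriction of the $\Pi$-module to $KQ$) and $\theta\in\operatorname{Hom}_Q(M,\tau M)$, morphisms being $f\in\operatorname{Hom}_Q(M,N)$ with $\theta'f=\tau(f)\theta$. A $\Pi$-module $y$ is rigid if $\operatorname{Ext}^1_\Pi(y,y)=0$. *)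

From HB Require Import structures.
From mathcomp Require Import all_boot all_order all_algebra.
Set Implicit Arguments. Unset Strict Implicit. Unset Printing Implicit Defensive.
Import GRing.Theory.
Local Open Scope ring_scope.

Record quiver := Quiver {
  vert : finType;
  arrow : finType;
  src : arrow -> vert;
  tgt : arrow -> vert }.

Definition acyclic (Q : quiver) : Prop :=
  forall (h0 : arrow Q) (s : seq (arrow Q)),
    ~ (path (fun a b => tgt a == src b) h0 s /\ tgt (last h0 s) = src h0).

Section Reps.
Variables (K : fieldType) (Q : quiver).

(* Finite-dimensional representations of Q: V_i = K^(rdim i) (row vectors),
   linear maps act on the right, so a map V_a -> V_b is a 'M_(dim a, dim b)
   and "f then g" is  f *m g. *)
Record rep := Rep {
  rdim : vert Q -> nat;
  rarr : forall h : arrow Q, 'M[K]_(rdim (src h), rdim (tgt h)) }.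

Definition vcast (m n : vert Q -> nat) (a i : vert Q) (A : 'M[K]_(m a, n a))
  : 'M[K]_(m i, n i) :=
  match a =P i with
  | ReflectT e => castmx (congr1 m e, congr1 n e) A
  | ReflectF _ => 0
  end.

Definition vmaps (M N : rep) := forall i : vert Q, 'M[K]_(rdim M i, rdim N i).

Definition is_qmor (M N : rep) (f : vmaps M N) : Prop :=
  forall h : arrow Q, rarr M h *m f (tgt h) = f (src h) *m rarr N h.

(* Hom_Q(M, tau N), in Ringel's model: families c_h : M_(tgt h) -> N_(src h)
   killed by the map to (+)_i Hom(M_i, N_i) (this is D Ext^1_Q(N, M), which is
   naturally isomorphic to Hom_Q(M, tau N) by the Auslander-Reiten formula). *)
Definition tauhom (M N : rep) :=
  forall h : arrow Q, 'M[K]_(rdim M (tgt h), rdim N (src h)).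

Definition in_tauhom (M N : rep) (c : tauhom M N) : Prop :=
  forall i : vert Q,
    \sum_(h : arrow Q) @vcast (rdim M) (rdim N) (src h) i (rarr M h *m c h)
  - \sum_(h : arrow Q) @vcast (rdim M) (rdim N) (tgt h) i (c h *m rarr N h) = 0.

(* action of Q-morphisms on Hom_Q(-, tau -): for g : M' -> M and f : N -> N',
   tau(f) o c o g. *)
Definition tau_comp (M' M N N' : rep) (g : vmaps M' M) (c : tauhom M N)
  (f : vmaps N N') : tauhom M' N' :=
  fun h => g (tgt h) *m c h *m f (src h).

(* Pi-modules as tau-data (M, theta), theta in Hom_Q(M, tau M); for
   M = M the condition in_tauhom is exactly the preprojective relation. *)
Record pimod := PiMod {
  pM : rep;
  ptheta : tauhom pM pM;
  ptheta_ok : in_tauhom ptheta }.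

Definition is_pimor (x y : pimod) (f : vmaps (pM x) (pM y)) : Prop :=
  is_qmor f /\
  forall h : arrow Q, f (tgt h) *m ptheta y h = ptheta x h *m f (src h).

Definition is_ses (z e y : pimod) (i : vmaps (pM z) (pM e))
  (p : vmaps (pM e) (pM y)) : Prop :=
  [/\ is_pimor i, is_pimor p &
      forall v : vert Q, [/\ row_free (i v), row_full (p v)
                          & (i v == kermx (p v))%MS]].

Definition is_extension (y z x : pimod) : Prop :=
  exists i p, @is_ses z x y i p.

(* Ext^1_Pi(y, z) = 0 (Yoneda): every s.e.s. 0 -> z -> e -> y -> 0 splits *)
Definition ext1_zero (y z : pimod) : Prop :=
  forall (e : pimod) i p, @is_ses z e y i p ->
    exists s : vmaps (pM y) (pM e),
      is_pimor s /\ forall v : vert Q, s v *m p v = 1%:M.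

Definition rigid (y : pimod) : Prop := ext1_zero y y.

Definition qhom_zero (M N : rep) : Prop :=
  forall f : vmaps M N, is_qmor f -> forall i, f i = 0.

Definition tauhom_zero (M N : rep) : Prop :=
  forall c : tauhom M N, in_tauhom c -> forall h, c h = 0.

Definition end_is_field (M : rep) : Prop :=
  (exists i, rdim M i != 0%N) /\
  forall f : vmaps M M, is_qmor f -> exists a : K, forall i, f i = a%:M.

Definition is_biproduct (M1 M2 M : rep) (i1 : vmaps M1 M) (i2 : vmaps M2 M)
  (p1 : vmaps M M1) (p2 : vmaps M M2) : Prop :=
  [/\ is_qmor i1, is_qmor i2, is_qmor p1, is_qmor p2 &
    forall v : vert Q,
      [/\ i1 v *m p1 v = 1%:M, i2 v *m p2 v = 1%:M, i1 v *m p2 v = 0,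
          i2 v *m p1 v = 0 & p1 v *m i1 v + p2 v *m i2 v = 1%:M]].

End Reps.

(* Hom_Q(M2, tau M1) = 0 kills the block theta_21 of theta in the decomposition
   M = M1 (+) M2, so i2 and p1 are morphisms of tau-data and x is an extension of
   x1 by x2.  Ext^1 of tau-data is computed by 1-cocycles modulo coboundaries.
   A cocycle of x1 (of x2, of the pair (x, x1)) becomes a cocycle of x once a
   correction c is added in the (-, 2)-blocks; c solves an equation mesh c = g,
   which is solvable as soon as g is orthogonal, for the trace pairing, to
   Hom_Q(M2, -).  This is automatic when Hom_Q(M2, M1) = 0, and for
   Hom_Q(M2, M) = K i2 it follows from the cocycle condition itself.  A
   coboundary of the lift then restricts to a coboundary of the original
   cocycle: the (2, 1)-block of its potential is a Q-morphism M2 -> M1, hence 0. *)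

From HB Require Import structures.
From mathcomp Require Import all_boot all_order all_algebra.
Set Implicit Arguments. Unset Strict Implicit. Unset Printing Implicit Defensive.
Import GRing.Theory.
Local Open Scope ring_scope.

Section Collect.
Variables (K : fieldType) (Q : quiver).
Implicit Types (m n k : vert Q -> nat) (F : arrow Q -> vert Q).

Lemma vcast_id m n a (A : 'M[K]_(m a, n a)) : vcast a A = A.
Proof. by rewrite /vcast; case: eqP => // e; rewrite (eq_irrelevance e erefl) castmx_id. Qed.

Lemma vcast_neq m n a i (A : 'M[K]_(m a, n a)) : a != i -> vcast i A = 0.
Proof. by rewrite /vcast; case: eqP. Qed.

Lemma vcast_scaleD m n a i c (A B : 'M[K]_(m a, n a)) :
  vcast i (c *: A + B) = c *: vcast i A + vcast i B.
Proof.
have [<-|ne] := eqVneq a i; first by rewrite !vcast_id.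
by rewrite !vcast_neq // scaler0 addr0.
Qed.

Lemma vcast_mull m k n a i (g : forall v, 'M[K]_(m v, k v)) (A : 'M[K]_(k a, n a)) :
  vcast i (g a *m A) = g i *m vcast i A.
Proof.
have [<-|ne] := eqVneq a i; first by rewrite !vcast_id.
by rewrite !vcast_neq // mulmx0.
Qed.

Lemma vcast_mulr m k n a i (f : forall v, 'M[K]_(k v, n v)) (A : 'M[K]_(m a, k a)) :
  vcast i (A *m f a) = vcast i A *m f i.
Proof.
have [<-|ne] := eqVneq a i; first by rewrite !vcast_id.
by rewrite !vcast_neq // mul0mx.
Qed.

Lemma vcast_block m1 m2 n1 n2 a i (A : 'M[K]_(m1 a, n1 a)) (B : 'M[K]_(m1 a, n2 a))
    (C : 'M[K]_(m2 a, n1 a)) (D : 'M[K]_(m2 a, n2 a)) :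
  vcast (m := fun v => (m1 v + m2 v)%N) (n := fun v => (n1 v + n2 v)%N) i
    (block_mx A B C D) = block_mx (vcast i A) (vcast i B) (vcast i C) (vcast i D).
Proof.
have [<-|ne] := eqVneq a i; first by rewrite !vcast_id.
by rewrite !vcast_neq // block_mx0.
Qed.

Definition collect m n F (U : forall h, 'M[K]_(m (F h), n (F h))) i : 'M[K]_(m i, n i) :=
  \sum_h vcast i (U h).

Lemma eq_collect m n F (U V : forall h, 'M[K]_(m (F h), n (F h))) i :
  (forall h, U h = V h) -> collect U i = collect V i.
Proof. by move=> eqUV; apply: eq_bigr => h _; rewrite eqUV. Qed.

Lemma collect_scaleD m n F c (U V : forall h, 'M[K]_(m (F h), n (F h))) i :
  collect (fun h => c *: U h + V h) i = c *: collect U i + collect V i.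
Proof.
rewrite /collect scaler_sumr -big_split.
by apply: eq_bigr => h _; rewrite vcast_scaleD.
Qed.

Lemma collectD m n F (U V : forall h, 'M[K]_(m (F h), n (F h))) i :
  collect (fun h => U h + V h) i = collect U i + collect V i.
Proof.
rewrite -[collect U i]scale1r -collect_scaleD.
by apply: eq_collect => h; rewrite scale1r.
Qed.

Lemma collectB m n F (U V : forall h, 'M[K]_(m (F h), n (F h))) i :
  collect (fun h => U h - V h) i = collect U i - collect V i.
Proof.
rewrite addrC -scaleN1r -collect_scaleD.
by apply: eq_collect => h; rewrite scaleN1r addrC.
Qed.

Lemma collect0 m n F i : collect (m := m) (n := n) (F := F) (fun _ => 0) i = 0.
Proof.
apply: big1 => h _.
by have [<-|ne] := eqVneq (F h) i; [exact: vcast_id | exact: vcast_neq].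
Qed.

Lemma collect_mull m k n F (g : forall v, 'M[K]_(m v, k v))
    (U : forall h, 'M[K]_(k (F h), n (F h))) i :
  collect (fun h => g (F h) *m U h) i = g i *m collect U i.
Proof. by rewrite /collect mulmx_sumr; apply: eq_bigr => h _; rewrite vcast_mull. Qed.

Lemma collect_mulr m k n F (f : forall v, 'M[K]_(k v, n v))
    (U : forall h, 'M[K]_(m (F h), k (F h))) i :
  collect (fun h => U h *m f (F h)) i = collect U i *m f i.
Proof. by rewrite /collect mulmx_suml; apply: eq_bigr => h _; rewrite vcast_mulr. Qed.

Lemma collect_sandwichB m n p q p' q' (l : forall v, 'M[K]_(m v, p v))
    (r : forall v, 'M[K]_(q v, n v)) (l' : forall v, 'M[K]_(m v, p' v))
    (r' : forall v, 'M[K]_(q' v, n v))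
    (U : forall h, 'M[K]_(p (src h), q (src h)))
    (U' : forall h, 'M[K]_(p' (src h), q' (src h)))
    (W : forall h, 'M[K]_(p (tgt h), q (tgt h)))
    (W' : forall h, 'M[K]_(p' (tgt h), q' (tgt h))) i :
  collect (fun h => l (src h) *m U h *m r (src h) + l' (src h) *m U' h *m r' (src h)) i
  - collect (fun h => l (tgt h) *m W h *m r (tgt h) + l' (tgt h) *m W' h *m r' (tgt h)) i
  = l i *m (collect U i - collect W i) *m r i + l' i *m (collect U' i - collect W' i) *m r' i.
Proof.
rewrite !collectD !collect_mulr !collect_mull !mulmxBr !mulmxBl.
by rewrite opprD addrACA.
Qed.

Lemma collect_block m1 m2 n1 n2 F (A : forall h, 'M[K]_(m1 (F h), n1 (F h)))
    (B : forall h, 'M[K]_(m1 (F h), n2 (F h))) (C : forall h, 'M[K]_(m2 (F h), n1 (F h)))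
    (D : forall h, 'M[K]_(m2 (F h), n2 (F h))) i :
  collect (m := fun v => (m1 v + m2 v)%N) (n := fun v => (n1 v + n2 v)%N)
    (fun h => block_mx (A h) (B h) (C h) (D h)) i
  = block_mx (collect A i) (collect B i) (collect C i) (collect D i).
Proof.
rewrite /collect; under eq_bigr do rewrite vcast_block.
elim: (index_enum _) => [|h r IH]; first by rewrite !big_nil block_mx0.
by rewrite !big_cons IH add_block_mx.
Qed.

Lemma sum_tr_collect m n F (U : forall h, 'M[K]_(m (F h), n (F h)))
    (f : forall v, 'M[K]_(n v, m v)) :
  \sum_i \tr (collect U i *m f i) = \sum_h \tr (U h *m f (F h)).
Proof.
under eq_bigr do rewrite mulmx_suml raddf_sum.
rewrite exchange_big; apply: eq_bigr => h _.
rewrite (bigD1 (F h)) //= vcast_id big1 ?addr0 // => i ne.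
by rewrite vcast_neq 1?eq_sym // mul0mx mxtrace0.
Qed.

End Collect.

Section Mesh.
Variables (K : fieldType) (Q : quiver).

Definition mesh (M N : rep K Q) (c : tauhom M N) i : 'M[K]_(rdim M i, rdim N i) :=
  collect (fun h => rarr M h *m c h) i - collect (fun h => c h *m rarr N h) i.

Lemma in_tauhom_eq (M N : rep K Q) (c : tauhom M N) i : in_tauhom c ->
  collect (fun h => rarr M h *m c h) i = collect (fun h => c h *m rarr N h) i.
Proof. by move/(_ i)/eqP; rewrite subr_eq0 => /eqP. Qed.

Lemma mesh_comp (M' M N N' : rep K Q) (g : vmaps M' M) (c : tauhom M N)
    (f : vmaps N N') i :
  is_qmor g -> is_qmor f -> mesh (tau_comp g c f) i = g i *m mesh c i *m f i.
Proof.
move=> qg qf; rewrite /mesh /tau_comp mulmxBr mulmxBl -!collect_mull -!collect_mulr.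
congr (_ - _); apply: eq_collect => h; first by rewrite !mulmxA qg.
by rewrite -!mulmxA -qf.
Qed.

Lemma in_tauhom_comp (M' M N N' : rep K Q) (g : vmaps M' M) (c : tauhom M N)
    (f : vmaps N N') :
  is_qmor g -> is_qmor f -> in_tauhom c -> in_tauhom (tau_comp g c f).
Proof.
move=> qg qf c_ok i; change (mesh (tau_comp g c f) i = 0).
by rewrite mesh_comp // [mesh c i]c_ok mulmx0 mul0mx.
Qed.

Section MeshLinear.
Variables (M N : rep K Q).

Lemma eq_mesh (c1 c2 : tauhom M N) i : (forall h, c1 h = c2 h) -> mesh c1 i = mesh c2 i.
Proof. by move=> eq_c; rewrite /mesh; congr (_ - _); apply: eq_collect => h; rewrite eq_c. Qed.

Lemma mesh_scaleD k (c1 c2 : tauhom M N) i :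
  mesh (fun h => k *: c1 h + c2 h) i = k *: mesh c1 i + mesh c2 i.
Proof.
rewrite /mesh.
under eq_collect => h do rewrite mulmxDr -scalemxAr.
under [X in _ - X]eq_collect => h do rewrite mulmxDl -scalemxAl.
by rewrite !collect_scaleD scalerBr opprD addrACA.
Qed.

Lemma sum_tr_mesh (c : tauhom M N) (phi : vmaps N M) :
  \sum_i \tr (mesh c i *m phi i) =
  \sum_h \tr (c h *m (phi (src h) *m rarr M h - rarr N h *m phi (tgt h))).
Proof.
under eq_bigr do rewrite mulmxBl raddfB.
rewrite sumrB !sum_tr_collect -sumrB; apply: eq_bigr => h _.
rewrite mulmxBr raddfB /= !mulmxA; congr (_ - _).
by rewrite -mulmxA mxtrace_mulC.
Qed.

End MeshLinear.
End Mesh.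

Lemma split_exact_mx (F : fieldType) r n m (i : 'M[F]_(r, n)) (p : 'M_(n, m))
    (j : 'M_(n, r)) (s : 'M_(m, n)) :
  i *m j = 1%:M -> s *m p = 1%:M -> i *m p = 0 -> p *m s + j *m i = 1%:M ->
  [/\ row_free i, row_full p & (i == kermx p)%MS].
Proof.
move=> ij sp ip psji; split; first by apply/row_freeP; exists j.
  by apply/row_fullP; exists s.
apply/andP; split; first exact/sub_kermxP.
rewrite -[kermx p]mulmx1 -psji mulmxDr !mulmxA mulmx_ker mul0mx add0r.
exact: submxMl.
Qed.

Section Cocycles.
Variables (K : fieldType) (Q : quiver).

Definition arrmaps (M N : rep K Q) := forall h, 'M[K]_(rdim M (src h), rdim N (tgt h)).

(* A 1-cochain (a, b) for Ext^1(y, z) gives the lower-left blocks of the arrows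
   and of theta on y (+) z; the cocycle condition is the preprojective relation
   of this extension (ext_theta_ok). *)
Definition cocycle (y z : pimod K Q) (a : arrmaps (pM y) (pM z)) (b : tauhom (pM y) (pM z))
  : Prop :=
  forall i, collect (fun h => a h *m ptheta z h + rarr (pM y) h *m b h) i
          - collect (fun h => b h *m rarr (pM z) h + ptheta y h *m a h) i = 0.

Definition coboundary (y z : pimod K Q) (a : arrmaps (pM y) (pM z))
    (b : tauhom (pM y) (pM z)) : Prop :=
  exists psi : vmaps (pM y) (pM z),
    (forall h, a h = rarr (pM y) h *m psi (tgt h) - psi (src h) *m rarr (pM z) h) /\
    (forall h, b h = ptheta y h *m psi (src h) - psi (tgt h) *m ptheta z h).

Section CocycleExtension.
Variables (y z : pimod K Q) (a : arrmaps (pM y) (pM z)) (b : tauhom (pM y) (pM z)).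
Hypothesis ab_cocycle : cocycle a b.

Definition ext_rep : rep K Q :=
  @Rep K Q (fun v => rdim (pM z) v + rdim (pM y) v)%N
    (fun h => block_mx (rarr (pM z) h) 0 (a h) (rarr (pM y) h)).

Definition ext_theta : tauhom ext_rep ext_rep :=
  fun h => block_mx (ptheta z h) 0 (b h) (ptheta y h).

Lemma ext_theta_ok : in_tauhom ext_theta.
Proof.
move=> i; change (mesh ext_theta i = 0); rewrite /mesh /=.
under eq_collect => h do rewrite mulmx_block !mulmx0 !mul0mx !addr0 !add0r.
under [X in _ - X]eq_collect => h do rewrite mulmx_block !mulmx0 !mul0mx !addr0 !add0r.
rewrite !collect_block opp_block_mx add_block_mx !collect0 subrr.
by rewrite [X in block_mx X _ _ _](ptheta_ok z) [X in block_mx _ _ X _]ab_cocycle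
  [X in block_mx _ _ _ X](ptheta_ok y) block_mx0.
Qed.

Definition ext_pimod : pimod K Q := PiMod ext_theta_ok.

Definition ext_in : vmaps (pM z) (pM ext_pimod) := fun v => row_mx 1%:M 0.
Definition ext_out : vmaps (pM ext_pimod) (pM y) := fun v => col_mx 0 1%:M.

Lemma ext_ses : is_ses ext_in ext_out.
Proof.
rewrite /ext_in /ext_out; split.
- by split=> h /=; rewrite /ext_theta mul_mx_row mul_row_block !mulmx0 !mul0mx !mulmx1 !mul1mx
    !addr0.
- by split=> h /=; rewrite /ext_theta !(mul_col_mx, mul_row_col, mulmx0, mul0mx, mulmx1,
    mul1mx, addr0, add0r).
move=> v; apply: (split_exact_mx (j := col_mx 1%:M 0) (s := row_mx 0 1%:M)).
- by rewrite mul_row_col mulmx1 mulmx0 addr0.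
- by rewrite mul_row_col mulmx1 mulmx0 add0r.
- by rewrite mul_row_col mulmx0 mul0mx addr0.
by rewrite !mul_col_row !mulmx0 !mul0mx !mulmx1 add_block_mx !addr0 !add0r
  -scalar_mx_block.
Qed.
End CocycleExtension.

Lemma rsubmx_col01 m n1 n2 (A : 'M[K]_(m, n1 + n2)) : rsubmx A = A *m col_mx 0 1%:M.
Proof. by rewrite -{2}[A]hsubmxK mul_row_col mulmx0 add0r mulmx1. Qed.

Lemma cocycle_coboundary (y z : pimod K Q) (a : arrmaps (pM y) (pM z))
    (b : tauhom (pM y) (pM z)) :
  ext1_zero y z -> cocycle a b -> coboundary a b.
Proof.
move=> ext0 ab_cocycle.
have [s [[s_qmor s_theta] s_split]] := ext0 _ _ _ (ext_ses ab_cocycle).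
pose psi v := lsubmx (s v).
have sE v : s v = row_mx (psi v) 1%:M.
  by rewrite -[LHS]hsubmxK -(s_split v) rsubmx_col01.
exists psi; split=> h.
- move: (s_qmor h); rewrite /= !sE mul_mx_row mul_row_block !mulmx1 mul1mx mulmx0 add0r.
  by case/eq_row_mx => -> _; rewrite addrC addKr.
- move: (s_theta h); rewrite /= !sE mul_mx_row mul_row_block !mulmx1 mul1mx mulmx0 add0r.
  by case/eq_row_mx => <- _; rewrite addrC addKr.
Qed.

Section SesCocycle.
Variables (y z e : pimod K Q) (i : vmaps (pM z) (pM e)) (p : vmaps (pM e) (pM y)).
Hypothesis ses : is_ses i p.
Variable r : vmaps (pM y) (pM e).
Hypothesis rp : forall v, r v *m p v = 1%:M.

Let i_pimor : is_pimor i. Proof. by case: ses. Qed.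
Let p_pimor : is_pimor p. Proof. by case: ses. Qed.

Let ip v : i v *m p v = 0.
Proof. by have [_ _ /(_ v)[_ _ /andP[/sub_kermxP]]] := ses. Qed.

Lemma ses_lift v k (X : 'M[K]_(k, rdim (pM e) v)) :
  X *m p v = 0 -> X *m pinvmx (i v) *m i v = X.
Proof.
have [_ _ /(_ v)[_ _ /andP[_ ker_i]]] := ses.
by move=> /sub_kermxP Xp; apply/mulmxKpV/(submx_trans Xp).
Qed.

Definition ses_arr : arrmaps (pM y) (pM z) := fun h =>
  (rarr (pM y) h *m r (tgt h) - r (src h) *m rarr (pM e) h) *m pinvmx (i (tgt h)).

Definition ses_tau : tauhom (pM y) (pM z) := fun h =>
  (ptheta y h *m r (src h) - r (tgt h) *m ptheta e h) *m pinvmx (i (src h)).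

Lemma ses_arrK h :
  ses_arr h *m i (tgt h) = rarr (pM y) h *m r (tgt h) - r (src h) *m rarr (pM e) h.
Proof.
have [p_qmor _] := p_pimor.
by apply: ses_lift; rewrite mulmxBl -!mulmxA p_qmor rp mulmxA rp mulmx1 mul1mx subrr.
Qed.

Lemma ses_tauK h :
  ses_tau h *m i (src h) = ptheta y h *m r (src h) - r (tgt h) *m ptheta e h.
Proof.
have [_ p_theta] := p_pimor.
by apply: ses_lift; rewrite mulmxBl -!mulmxA -p_theta rp mulmxA rp mulmx1 mul1mx subrr.
Qed.

Lemma ses_cocycle : cocycle ses_arr ses_tau.
Proof.
have [i_qmor i_theta] := i_pimor.
move=> v; have [_ _ /(_ v)[i_free _ _]] := ses.
apply: (row_free_inj i_free); rewrite mul0mx mulmxBl -!collect_mulr.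
have E1 h : (ses_arr h *m ptheta z h + rarr (pM y) h *m ses_tau h) *m i (src h) =
    rarr (pM y) h *m ptheta y h *m r (src h) - r (src h) *m (rarr (pM e) h *m ptheta e h).
  rewrite mulmxDl -[_ *m ptheta z h *m _]mulmxA -i_theta mulmxA ses_arrK.
  rewrite -[_ *m ses_tau h *m _]mulmxA ses_tauK.
  by rewrite mulmxBl !mulmxBr !mulmxA addrC addrA subrK.
have E2 h : (ses_tau h *m rarr (pM z) h + ptheta y h *m ses_arr h) *m i (tgt h) =
    ptheta y h *m rarr (pM y) h *m r (tgt h) - r (tgt h) *m (ptheta e h *m rarr (pM e) h).
  rewrite mulmxDl -[_ *m rarr (pM z) h *m _]mulmxA i_qmor mulmxA ses_tauK.
  rewrite -[_ *m ses_arr h *m _]mulmxA ses_arrK.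
  by rewrite mulmxBl !mulmxBr !mulmxA addrC addrA subrK.
under eq_collect => h do rewrite E1.
under [X in _ - X]eq_collect => h do rewrite E2.
rewrite !collectB !collect_mulr !collect_mull [X in X - _]addrC.
rewrite (in_tauhom_eq v (ptheta_ok y)) (in_tauhom_eq v (ptheta_ok e)).
by rewrite opprB addrACA addNr subrr addr0.
Qed.

Lemma ses_split_of_coboundary : coboundary ses_arr ses_tau ->
  exists s : vmaps (pM y) (pM e), is_pimor s /\ forall v, s v *m p v = 1%:M.
Proof.
have [i_qmor i_theta] := i_pimor.
case=> psi [arrE tauE]; exists (fun v => r v - psi v *m i v); split; first split.
- move=> h; have := ses_arrK h; rewrite arrE mulmxBl -[psi _ *m _ *m _]mulmxA i_qmor.
  rewrite !mulmxA mulmxBr mulmxBl !mulmxA => /eqP; rewrite subr_eq => /eqP ->.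
  by rewrite opprD addrA subKr.
- move=> h; have := ses_tauK h; rewrite tauE mulmxBl -[psi _ *m _ *m _]mulmxA -i_theta.
  rewrite !mulmxA mulmxBr mulmxBl !mulmxA => /eqP; rewrite subr_eq => /eqP ->.
  by rewrite opprD addrA subKr.
by move=> v; rewrite mulmxBl rp -mulmxA ip mulmx0 subr0.
Qed.

End SesCocycle.

Lemma ext1_zeroP (y z : pimod K Q) :
  ext1_zero y z <-> forall a b, @cocycle y z a b -> coboundary a b.
Proof.
split=> [ext0 a b|cob e i p ses]; first exact: cocycle_coboundary.
pose r v := pinvmx (p v).
have rp v : r v *m p v = 1%:M.
  have [_ _ /(_ v)[_ p_full _]] := ses.
  by rewrite -[r v]mul1mx mulmxKpV // submx_full.
exact/(ses_split_of_coboundary ses rp)/cob/(ses_cocycle ses rp).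
Qed.

End Cocycles.

Section TraceDuality.
Variable K : fieldType.

Lemma mxtrace_delta_mul m n (i : 'I_m) (j : 'I_n) (A : 'M[K]_(n, m)) :
  \tr (delta_mx i j *m A) = A j i.
Proof.
rewrite /mxtrace (bigD1 i) //= big1 ?addr0 => [|k ne_ki].
  rewrite mxE (bigD1 j) //= big1 ?addr0; first by rewrite mxE !eqxx mul1r.
  by move=> l ne_lj; rewrite mxE (negbTE ne_lj) andbF mul0r.
by rewrite mxE big1 // => l _; rewrite mxE (negbTE ne_ki) mul0r.
Qed.

Lemma trace_form_eq0 (I : finType) (p q : I -> nat) (X : forall j, 'M[K]_(q j, p j)) :
  (forall c : forall j, 'M[K]_(p j, q j), \sum_j \tr (c j *m X j) = 0) ->
  forall j, X j = 0.
Proof.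
move=> X_perp j; apply/matrixP => r s; rewrite mxE.
pose c k : 'M[K]_(p k, q k) :=
  \matrix_(a, b) ((k == j) && (val a == val s) && (val b == val r))%:R.
have cjE : c j = delta_mx s r by apply/matrixP => a b; rewrite !mxE eqxx.
rewrite -(X_perp c) (bigD1 j) //= big1 ?addr0 => [|k ne_kj].
  by rewrite cjE mxtrace_delta_mul.
suff -> : c k = 0 by rewrite mul0mx mxtrace0.
by apply/matrixP => a b; rewrite !mxE (negbTE ne_kj).
Qed.

Lemma mx_trace_repr m n (lam : {scalar 'M[K]_(m, n)}) A :
  lam A = \tr (A *m \matrix_(s, r) lam (delta_mx r s)).
Proof.
rewrite {1}[A]matrix_sum_delta linear_sum /mxtrace; apply: eq_bigr => r _.
rewrite linear_sum mxE; apply: eq_bigr => s _.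
by rewrite linearZ mxE.
Qed.

Section FfunSingle.
Variables (I : finType) (V : lmodType K) (i : I).

Definition ffun_single (v : V) : {ffun I -> V} := [ffun j => (j == i)%:R *: v].

Fact ffun_single_is_linear : linear ffun_single.
Proof. by move=> k u v; apply/ffunP => j; rewrite !ffunE scalerDr !scalerA mulrC. Qed.

HB.instance Definition _ := GRing.isSemilinear.Build K V {ffun I -> V} _ ffun_single
  (GRing.semilinear_linear ffun_single_is_linear).

End FfunSingle.

Lemma ffun_trace_repr (I : finType) m n (lam : {scalar {ffun I -> 'M[K]_(m, n)}}) u :
  lam u = \sum_i \tr (u i *m \matrix_(s, r) lam (ffun_single i (delta_mx r s))).
Proof.
have uE : u = \sum_i ffun_single i (u i).
  apply/ffunP => j; rewrite sum_ffunE (bigD1 j) //= big1 => [|i ne_ij].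
    by rewrite ffunE eqxx scale1r addr0.
  by rewrite ffunE eq_sym (negbTE ne_ij) scale0r.
rewrite {1}uE linear_sum; apply: eq_bigr => i _.
exact: (mx_trace_repr (lam \o ffun_single i)).
Qed.

Lemma separating_scalar (vT : vectType K) (U : {vspace vT}) v : v \notin U ->
  exists lam : {scalar vT}, lam v = 1 /\ {in U, forall u, lam u = 0}.
Proof.
move=> vNU; pose X := [tuple of v :: vbasis U].
have freeX : free X.
  by rewrite /= free_cons (span_basis (vbasisP U)) vNU (basis_free (vbasisP U)).
exists (coord X ord0); split; first exact: (coord_free ord0 ord0 freeX).
move=> u uU; rewrite (coord_vbasis uU) linear_sum big1 // => k _.
by rewrite linearZ /= (coord_free (lift ord0 k) ord0 freeX) mulr0.
Qed.

Definition resize p' q' p q (A : 'M[K]_(p, q)) : 'M[K]_(p', q') :=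
  pid_mx p *m A *m pid_mx q.

Lemma pid_mx_dim m n : pid_mx m = pid_mx n :> 'M[K]_(m, n).
Proof. by rewrite -pid_mx_minh -[RHS]pid_mx_minv minnC. Qed.

Lemma resizeK p q p' q' (A : 'M[K]_(p, q)) :
  (p <= p')%N -> (q <= q')%N -> resize p q (resize p' q' A) = A.
Proof.
move=> le_pp' le_qq'; rewrite /resize !mulmxA mul_pid_mx -!mulmxA mul_pid_mx.
rewrite (minn_idPr le_pp') (minn_idPr le_pp') (minn_idPl le_qq') (minn_idPr le_qq').
by rewrite !pid_mx_1 mul1mx mulmx1.
Qed.

Lemma mxtrace_resize p q p' q' (A : 'M[K]_(p, q)) (B : 'M[K]_(q', p')) :
  \tr (resize p' q' A *m B) = \tr (A *m resize q p B).
Proof.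
by rewrite /resize -2!mulmxA mxtrace_mulC !mulmxA (pid_mx_dim q q') (pid_mx_dim p' p).
Qed.

Lemma resize_scaleD p' q' p q k (A B : 'M[K]_(p, q)) :
  resize p' q' (k *: A + B) = k *: resize p' q' A + resize p' q' B.
Proof. by rewrite /resize mulmxDr mulmxDl -scalemxAr -scalemxAl. Qed.

End TraceDuality.

Section MeshOnto.
Variables (K : fieldType) (Q : quiver) (N L : rep K Q).

(* Padding every block to a common size D makes both sides of mesh vectTypes. *)
Let D := (\sum_i (rdim N i + rdim L i))%N.

Let leq_rdimN i : (rdim N i <= D)%N.
Proof. by rewrite /D (bigD1 i) //= -addnA leq_addr. Qed.

Let leq_rdimL i : (rdim L i <= D)%N.
Proof. by rewrite /D (bigD1 i) //= addnAC leq_addl. Qed.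

Definition unpad_tauhom (u : {ffun arrow Q -> 'M[K]_D}) : tauhom N L :=
  fun h => resize _ _ (u h).

Definition padded_mesh (u : {ffun arrow Q -> 'M[K]_D}) : {ffun vert Q -> 'M[K]_D} :=
  [ffun i => resize D D (mesh (unpad_tauhom u) i)].

Fact padded_mesh_is_linear : linear padded_mesh.
Proof.
move=> k u v; apply/ffunP => i; rewrite !ffunE -resize_scaleD -mesh_scaleD.
by congr resize; apply: eq_mesh => h; rewrite /unpad_tauhom !ffunE resize_scaleD.
Qed.

HB.instance Definition _ :=
  GRing.isSemilinear.Build K {ffun arrow Q -> 'M[K]_D} {ffun vert Q -> 'M[K]_D} _
    padded_mesh (GRing.semilinear_linear padded_mesh_is_linear).

(* By sum_tr_mesh the trace pairing identifies the annihilator of the image of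
   mesh with Hom_Q(L, N): a functional separating g from the image is the
   pairing with a family phi, which is then a Q-morphism. *)
Lemma mesh_onto (g : forall i, 'M[K]_(rdim N i, rdim L i)) :
    (forall phi : vmaps L N, is_qmor phi -> \sum_i \tr (g i *m phi i) = 0) ->
  exists c : tauhom N L, forall i, mesh c i = g i.
Proof.
move=> g_perp; pose gpad := [ffun i => resize D D (g i)].
have [/memv_imgP[u _]|gNimg] := boolP (gpad \in limg (linfun padded_mesh)).
  move=> /ffunP gE; exists (unpad_tauhom u) => i.
  have := congr1 (fun A => resize (rdim N i) (rdim L i) A) (gE i).
  by rewrite lfunE !ffunE !resizeK.
have [lam [lam_g lam_img]] := separating_scalar gNimg.
pose phi : vmaps L N := fun i =>
  resize _ _ (\matrix_(s, r) lam (ffun_single i (delta_mx r s))).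
have lamE f : lam [ffun i => resize D D (f i)] = \sum_i \tr (f i *m phi i).
  by rewrite ffun_trace_repr; apply: eq_bigr => i _; rewrite ffunE mxtrace_resize.
have phi_qmor : is_qmor phi.
  move=> h; apply/eqP; rewrite eq_sym -subr_eq0; apply/eqP; move: h.
  apply: trace_form_eq0 => c; rewrite -sum_tr_mesh -lamE.
  pose cpad := [ffun h => resize D D (c h)].
  rewrite (_ : [ffun i => _] = padded_mesh cpad).
    by apply: lam_img; rewrite -[padded_mesh _]lfunE memv_img ?memvf.
  apply/ffunP => i; rewrite !ffunE; congr resize; apply: eq_mesh => h.
  by rewrite /unpad_tauhom ffunE resizeK.
by have := g_perp phi phi_qmor; rewrite -lamE lam_g => /eqP; rewrite oner_eq0.
Qed.

Lemma mesh_onto_of_qhom_zero (g : forall i, 'M[K]_(rdim N i, rdim L i)) :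
  qhom_zero L N -> exists c : tauhom N L, forall i, mesh c i = g i.
Proof.
move=> homLN; apply: mesh_onto => phi /homLN phi0.
by rewrite big1 // => i _; rewrite phi0 mulmx0 mxtrace0.
Qed.

End MeshOnto.

Section Biproduct.
Variables (K : fieldType) (Q : quiver) (x : pimod K Q) (M1 M2 : rep K Q).
Variables (i1 : vmaps M1 (pM x)) (i2 : vmaps M2 (pM x)).
Variables (p1 : vmaps (pM x) M1) (p2 : vmaps (pM x) M2).
Hypothesis biprod : is_biproduct i1 i2 p1 p2.
Hypothesis theta21 : forall h, i2 (tgt h) *m ptheta x h *m p1 (src h) = 0.
Hypotheses (H1 : in_tauhom (tau_comp i1 (ptheta x) p1))
           (H2 : in_tauhom (tau_comp i2 (ptheta x) p2)).

Local Notation th := (ptheta x).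
(* [tau_comp ij th pk] is the block theta_jk; [theta21] says theta_21 = 0. *)
Local Notation x1 := (PiMod H1).
Local Notation x2 := (PiMod H2).

Let qi1 : is_qmor i1. Proof. by case: biprod. Qed.
Let qi2 : is_qmor i2. Proof. by case: biprod. Qed.
Let qp1 : is_qmor p1. Proof. by case: biprod. Qed.
Let qp2 : is_qmor p2. Proof. by case: biprod. Qed.
Let i1p1 v : i1 v *m p1 v = 1%:M. Proof. by case: biprod => _ _ _ _ /(_ v)[]. Qed.
Let i2p2 v : i2 v *m p2 v = 1%:M. Proof. by case: biprod => _ _ _ _ /(_ v)[]. Qed.
Let i2p1 v : i2 v *m p1 v = 0. Proof. by case: biprod => _ _ _ _ /(_ v)[]. Qed.
Let p1i1_p2i2 v : p1 v *m i1 v + p2 v *m i2 v = 1%:M.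
Proof. by case: biprod => _ _ _ _ /(_ v)[]. Qed.

Lemma i1_theta h : i1 (tgt h) *m th h =
  tau_comp i1 th p1 h *m i1 (src h) + tau_comp i1 th p2 h *m i2 (src h).
Proof. by rewrite -[LHS]mulmx1 -(p1i1_p2i2 (src h)) mulmxDr !mulmxA. Qed.

Lemma i2_theta h : i2 (tgt h) *m th h = tau_comp i2 th p2 h *m i2 (src h).
Proof. by rewrite -[LHS]mulmx1 -(p1i1_p2i2 (src h)) mulmxDr !mulmxA theta21 mul0mx add0r. Qed.

Lemma theta_p1 h : th h *m p1 (src h) = p1 (tgt h) *m tau_comp i1 th p1 h.
Proof.
rewrite -[LHS]mul1mx -(p1i1_p2i2 (tgt h)) mulmxDl -!mulmxA [i2 _ *m _]mulmxA theta21.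
by rewrite mulmx0 addr0 !mulmxA.
Qed.

Lemma theta_p2 h : th h *m p2 (src h) =
  p1 (tgt h) *m tau_comp i1 th p2 h + p2 (tgt h) *m tau_comp i2 th p2 h.
Proof. by rewrite -[LHS]mul1mx -(p1i1_p2i2 (tgt h)) mulmxDl !mulmxA. Qed.

Lemma biproduct_ses : is_ses i2 p1 (z := x2) (y := x1).
Proof.
split; [split=> // h; exact: i2_theta | split=> // h; exact/esym/theta_p1 |].
by move=> v; apply: (split_exact_mx (i2p2 v) (i1p1 v) (i2p1 v)).
Qed.

Lemma qmor_corner (psi : vmaps (pM x) (pM x)) :
    (forall h, i2 (src h) *m (rarr (pM x) h *m psi (tgt h) - psi (src h) *m rarr (pM x) h)
                 *m p1 (tgt h) = 0) ->
  is_qmor (fun v => i2 v *m psi v *m p1 v).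
Proof.
move=> corner0 h; apply/eqP; rewrite -subr_eq0 -[0](corner0 h).
by rewrite mulmxBr mulmxBl !mulmxA -qi2 -!mulmxA qp1 !mulmxA.
Qed.

Definition lift11_arr (a : arrmaps M1 M1) : arrmaps (pM x) (pM x) :=
  fun h => p1 (src h) *m a h *m i1 (tgt h).

Definition lift11_tau (b : tauhom M1 M1) (c : tauhom M1 M2) : tauhom (pM x) (pM x) :=
  fun h => p1 (tgt h) *m b h *m i1 (src h) + p1 (tgt h) *m c h *m i2 (src h).

Lemma cocycle_lift11 (a : arrmaps M1 M1) (b : tauhom M1 M1) (c : tauhom M1 M2) :
    cocycle (y := x1) (z := x1) a b ->
    (forall i, mesh c i = - collect (fun h => a h *m tau_comp i1 th p2 h) i) ->
  cocycle (lift11_arr a) (lift11_tau b c).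
Proof.
move=> ab_cocycle c_mesh i.
have E1 h : lift11_arr a h *m th h + rarr (pM x) h *m lift11_tau b c h =
    p1 (src h) *m (a h *m tau_comp i1 th p1 h + rarr M1 h *m b h) *m i1 (src h) +
    p1 (src h) *m (a h *m tau_comp i1 th p2 h + rarr M1 h *m c h) *m i2 (src h).
  rewrite /lift11_arr /lift11_tau -mulmxA i1_theta !mulmxDr !mulmxDl !mulmxA qp1.
  by rewrite addrACA.
have E2 h : lift11_tau b c h *m rarr (pM x) h + th h *m lift11_arr a h =
    p1 (tgt h) *m (b h *m rarr M1 h + tau_comp i1 th p1 h *m a h) *m i1 (tgt h) +
    p1 (tgt h) *m (c h *m rarr M2 h) *m i2 (tgt h).
  rewrite /lift11_arr /lift11_tau mulmxDl -!mulmxA -qi1 -qi2 !mulmxA theta_p1.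
  by rewrite !mulmxDr !mulmxDl !mulmxA addrAC.
under eq_collect do rewrite E1.
under [X in _ - X]eq_collect do rewrite E2.
rewrite collect_sandwichB (ab_cocycle i) collectD -addrA -/(mesh c i) c_mesh addrN.
by rewrite !mulmx0 !mul0mx addr0.
Qed.

Lemma coboundary_push11 (a : arrmaps M1 M1) (b : tauhom M1 M1) (c : tauhom M1 M2) :
    qhom_zero M2 M1 -> coboundary (lift11_arr a) (lift11_tau b c) ->
  coboundary (y := x1) (z := x1) a b.
Proof.
move=> hom21 [psi [arrE tauE]].
have psi21 : forall v, i2 v *m psi v *m p1 v = 0.
  apply: (hom21 (fun v => i2 v *m psi v *m p1 v)); apply: qmor_corner => h.
  by rewrite -arrE /lift11_arr !mulmxA i2p1 !mul0mx.
exists (fun v => i1 v *m psi v *m p1 v); split=> h.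
- have -> : a h = i1 (src h) *m lift11_arr a h *m p1 (tgt h).
    by rewrite /lift11_arr !mulmxA i1p1 mul1mx -mulmxA i1p1 mulmx1.
  by rewrite arrE mulmxBr mulmxBl !mulmxA -qi1 -!mulmxA qp1 !mulmxA.
have -> : b h = i1 (tgt h) *m lift11_tau b c h *m p1 (src h).
  rewrite /lift11_tau mulmxDr mulmxDl !mulmxA i1p1 !mul1mx -!mulmxA i1p1 i2p1.
  by rewrite mulmx1 mulmx0 addr0.
rewrite tauE mulmxBr mulmxBl /=; congr (_ - _).
  rewrite !mulmxA i1_theta !mulmxDl -!mulmxA.
  by rewrite [i2 _ *m (psi _ *m p1 _)]mulmxA psi21 !mulmx0 addr0.
by rewrite -!mulmxA theta_p1 !mulmxA.
Qed.

Lemma rigid_x1 : qhom_zero M2 M1 -> rigid x -> rigid x1.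
Proof.
move=> hom21 /ext1_zeroP x_H1; apply/ext1_zeroP => a b ab_cocycle.
have [c c_mesh] := mesh_onto_of_qhom_zero
  (fun i => - collect (fun h => a h *m tau_comp i1 th p2 h) i) hom21.
exact: coboundary_push11 hom21 (x_H1 _ _ (cocycle_lift11 ab_cocycle c_mesh)).
Qed.

Definition lift22_arr (a : arrmaps M2 M2) : arrmaps (pM x) (pM x) :=
  fun h => p2 (src h) *m a h *m i2 (tgt h).

Definition lift22_tau (b : tauhom M2 M2) (c : tauhom M1 M2) : tauhom (pM x) (pM x) :=
  fun h => p2 (tgt h) *m b h *m i2 (src h) + p1 (tgt h) *m c h *m i2 (src h).

Lemma cocycle_lift22 (a : arrmaps M2 M2) (b : tauhom M2 M2) (c : tauhom M1 M2) :
    cocycle (y := x2) (z := x2) a b ->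
    (forall i, mesh c i = collect (fun h => tau_comp i1 th p2 h *m a h) i) ->
  cocycle (lift22_arr a) (lift22_tau b c).
Proof.
move=> ab_cocycle c_mesh i.
have E1 h : lift22_arr a h *m th h + rarr (pM x) h *m lift22_tau b c h =
    p2 (src h) *m (a h *m tau_comp i2 th p2 h + rarr M2 h *m b h) *m i2 (src h) +
    p1 (src h) *m (rarr M1 h *m c h) *m i2 (src h).
  rewrite /lift22_arr /lift22_tau -mulmxA i2_theta !mulmxDr !mulmxDl !mulmxA qp1 qp2.
  by rewrite addrA.
have E2 h : lift22_tau b c h *m rarr (pM x) h + th h *m lift22_arr a h =
    p2 (tgt h) *m (b h *m rarr M2 h + tau_comp i2 th p2 h *m a h) *m i2 (tgt h) +
    p1 (tgt h) *m (c h *m rarr M2 h + tau_comp i1 th p2 h *m a h) *m i2 (tgt h).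
  rewrite /lift22_arr /lift22_tau mulmxDl -!mulmxA -qi2 !mulmxA theta_p2.
  by rewrite !mulmxDr !mulmxDl !mulmxA [X in _ + X = _]addrC addrACA.
under eq_collect do rewrite E1.
under [X in _ - X]eq_collect do rewrite E2.
rewrite collect_sandwichB (ab_cocycle i) collectD opprD addrA -/(mesh c i) c_mesh.
by rewrite subrr !mulmx0 !mul0mx addr0.
Qed.

Lemma coboundary_push22 (a : arrmaps M2 M2) (b : tauhom M2 M2) (c : tauhom M1 M2) :
    qhom_zero M2 M1 -> coboundary (lift22_arr a) (lift22_tau b c) ->
  coboundary (y := x2) (z := x2) a b.
Proof.
move=> hom21 [psi [arrE tauE]].
have psi21 : forall v, i2 v *m psi v *m p1 v = 0.
  apply: (hom21 (fun v => i2 v *m psi v *m p1 v)); apply: qmor_corner => h.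
  by rewrite -arrE /lift22_arr !mulmxA i2p2 mul1mx -mulmxA i2p1 mulmx0.
exists (fun v => i2 v *m psi v *m p2 v); split=> h.
- have -> : a h = i2 (src h) *m lift22_arr a h *m p2 (tgt h).
    by rewrite /lift22_arr !mulmxA i2p2 mul1mx -mulmxA i2p2 mulmx1.
  by rewrite arrE mulmxBr mulmxBl !mulmxA -qi2 -!mulmxA qp2 !mulmxA.
have -> : b h = i2 (tgt h) *m lift22_tau b c h *m p2 (src h).
  rewrite /lift22_tau mulmxDr mulmxDl !mulmxA i2p2 i2p1 mul1mx !mul0mx addr0.
  by rewrite -mulmxA i2p2 mulmx1.
rewrite tauE mulmxBr mulmxBl /=; congr (_ - _); first by rewrite !mulmxA i2_theta.
by rewrite -!mulmxA theta_p2 !mulmxDr !mulmxA psi21 !mul0mx add0r.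
Qed.

Lemma rigid_x2 : qhom_zero M2 M1 -> rigid x -> rigid x2.
Proof.
move=> hom21 /ext1_zeroP x_H1; apply/ext1_zeroP => a b ab_cocycle.
have [c c_mesh] := mesh_onto_of_qhom_zero
  (fun i => collect (fun h => tau_comp i1 th p2 h *m a h) i) hom21.
exact: coboundary_push22 hom21 (x_H1 _ _ (cocycle_lift22 ab_cocycle c_mesh)).
Qed.

Definition liftx1_arr (a : arrmaps (pM x) M1) : arrmaps (pM x) (pM x) :=
  fun h => a h *m i1 (tgt h).

Definition liftx1_tau (b : tauhom (pM x) M1) (c : tauhom (pM x) M2) : tauhom (pM x) (pM x) :=
  fun h => b h *m i1 (src h) + c h *m i2 (src h).

Lemma cocycle_liftx1 (a : arrmaps (pM x) M1) (b : tauhom (pM x) M1)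
    (c : tauhom (pM x) M2) :
    cocycle (y := x) (z := x1) a b ->
    (forall i, mesh c i = - collect (fun h => a h *m tau_comp i1 th p2 h) i) ->
  cocycle (liftx1_arr a) (liftx1_tau b c).
Proof.
move=> ab_cocycle c_mesh i; pose one v : 'M[K]_(rdim (pM x) v) := 1%:M.
have E1 h : liftx1_arr a h *m th h + rarr (pM x) h *m liftx1_tau b c h =
    one (src h) *m (a h *m tau_comp i1 th p1 h + rarr (pM x) h *m b h) *m i1 (src h) +
    one (src h) *m (a h *m tau_comp i1 th p2 h + rarr (pM x) h *m c h) *m i2 (src h).
  rewrite /one !mul1mx /liftx1_arr /liftx1_tau -mulmxA i1_theta.
  by rewrite !mulmxDr !mulmxDl !mulmxA addrACA.
have E2 h : liftx1_tau b c h *m rarr (pM x) h + th h *m liftx1_arr a h =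
    one (tgt h) *m (b h *m rarr M1 h + th h *m a h) *m i1 (tgt h) +
    one (tgt h) *m (c h *m rarr M2 h) *m i2 (tgt h).
  rewrite /one !mul1mx /liftx1_arr /liftx1_tau mulmxDl -!mulmxA -qi1 -qi2.
  by rewrite !mulmxDl !mulmxA addrAC.
under eq_collect do rewrite E1.
under [X in _ - X]eq_collect do rewrite E2.
rewrite collect_sandwichB (ab_cocycle i) collectD -addrA -/(mesh c i) c_mesh addrN.
by rewrite !mulmx0 !mul0mx addr0.
Qed.

Lemma coboundary_pushx1 (a : arrmaps (pM x) M1) (b : tauhom (pM x) M1)
    (c : tauhom (pM x) M2) :
  coboundary (liftx1_arr a) (liftx1_tau b c) -> coboundary (y := x) (z := x1) a b.
Proof.
case=> psi [arrE tauE]; exists (fun v => psi v *m p1 v); split=> h.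
- have -> : a h = liftx1_arr a h *m p1 (tgt h) by rewrite -mulmxA i1p1 mulmx1.
  by rewrite arrE mulmxBl -!mulmxA qp1 !mulmxA.
have -> : b h = liftx1_tau b c h *m p1 (src h).
  by rewrite mulmxDl -!mulmxA i1p1 i2p1 mulmx1 mulmx0 addr0.
by rewrite tauE mulmxBl -!mulmxA theta_p1 !mulmxA.
Qed.

Lemma sum_tr_cocycle_x1 (a : arrmaps (pM x) M1) (b : tauhom (pM x) M1) :
    cocycle (y := x) (z := x1) a b ->
  \sum_h \tr (a h *m tau_comp i1 th p2 h *m i2 (src h)) = 0.
Proof.
move=> ab_cocycle.
have : \sum_i \tr ((collect (fun h => a h *m tau_comp i1 th p1 h + rarr (pM x) h *m b h) i
    - collect (fun h => b h *m rarr M1 h + th h *m a h) i) *m i1 i) = 0.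
  by rewrite big1 // => i _; rewrite ab_cocycle mul0mx mxtrace0.
under eq_bigr do rewrite mulmxBl raddfB.
rewrite sumrB !sum_tr_collect -sumrB => sum0.
apply/eqP; rewrite -oppr_eq0 -sumrN -[X in _ == X]sum0; apply/eqP.
apply: eq_bigr => h _; rewrite !mulmxDl !mxtraceD.
have -> : \tr (b h *m rarr M1 h *m i1 (tgt h)) = \tr (rarr (pM x) h *m b h *m i1 (src h)).
  by rewrite -mulmxA qi1 mulmxA mxtrace_mulC mulmxA.
have -> : \tr (th h *m a h *m i1 (tgt h)) = \tr (a h *m tau_comp i1 th p1 h *m i1 (src h))
    + \tr (a h *m tau_comp i1 th p2 h *m i2 (src h)).
  rewrite -mulmxA mxtrace_mulC -[a h *m _ *m th h]mulmxA i1_theta.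
  by rewrite mulmxDr mxtraceD !mulmxA.
by rewrite addrKA opprD addrA subrr add0r.
Qed.

Lemma qmor_from_M2_scalar (phi : vmaps M2 (pM x)) :
    qhom_zero M2 M1 -> end_is_field M2 -> is_qmor phi ->
  exists k : K, forall v, phi v = k *: i2 v.
Proof.
move=> hom21 [_ endM2] phi_qmor.
have phi1_qmor : is_qmor (fun v => phi v *m p1 v).
  by move=> h; rewrite /= mulmxA phi_qmor -mulmxA qp1 mulmxA.
have phi2_qmor : is_qmor (fun v => phi v *m p2 v).
  by move=> h; rewrite /= mulmxA phi_qmor -mulmxA qp2 mulmxA.
have [k phi2E] := endM2 _ phi2_qmor; exists k => v.
rewrite -[phi v]mulmx1 -(p1i1_p2i2 v) mulmxDr !mulmxA (hom21 _ phi1_qmor v) mul0mx add0r.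
by rewrite phi2E mul_scalar_mx.
Qed.

Lemma ext1_zero_x_x1 :
  qhom_zero M2 M1 -> end_is_field M2 -> rigid x -> ext1_zero x x1.
Proof.
move=> hom21 endM2 /ext1_zeroP x_H1; apply/ext1_zeroP => a b ab_cocycle.
have [c c_mesh] : exists c : tauhom (pM x) M2,
    forall i, mesh c i = - collect (fun h => a h *m tau_comp i1 th p2 h) i.
  apply: mesh_onto => phi /(qmor_from_M2_scalar hom21 endM2)[k phiE].
  under eq_bigr do rewrite phiE -scalemxAr mxtraceZ mulNmx raddfN.
  by rewrite -mulr_sumr sumrN sum_tr_collect (sum_tr_cocycle_x1 ab_cocycle) oppr0 mulr0.
exact: coboundary_pushx1 (x_H1 _ _ (cocycle_liftx1 ab_cocycle c_mesh)).
Qed.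

End Biproduct.

Theorem lemma9p4 (K : closedFieldType) (Q : quiver) (HQ : acyclic Q)
  (x : pimod K Q) (M1 M2 : rep K Q)
  (i1 : vmaps M1 (pM x)) (i2 : vmaps M2 (pM x))
  (p1 : vmaps (pM x) M1) (p2 : vmaps (pM x) M2)
  (Hdec : is_biproduct i1 i2 p1 p2)
  (Htau : tauhom_zero M2 M1)
  (H1 : in_tauhom (tau_comp i1 (ptheta x) p1))
  (H2 : in_tauhom (tau_comp i2 (ptheta x) p2)) :
  let x1 := PiMod H1 in
  let x2 := PiMod H2 in
  [/\ is_extension x1 x2 x,
      qhom_zero M2 M1 -> rigid x -> rigid x1 /\ rigid x2 &
      qhom_zero M2 M1 -> rigid x -> end_is_field M2 -> ext1_zero x x1].
Proof.
move=> x1 x2; have [_ qi2 qp1 _ _] := Hdec.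
have theta21 h : i2 (tgt h) *m ptheta x h *m p1 (src h) = 0.
  exact: Htau (in_tauhom_comp qi2 qp1 (ptheta_ok x)) h.
split=> [|hom21 x_rigid|hom21 x_rigid endM2].
- by exists i2, p1; apply: biproduct_ses.
- split; [exact (rigid_x1 Hdec theta21 hom21 x_rigid)
         | exact (rigid_x2 Hdec theta21 hom21 x_rigid)].
- exact (ext1_zero_x_x1 Hdec theta21 hom21 endM2 x_rigid).
Qed.
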